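(* Let $N\in\mathbb{N}$ and $m,m'\in\mathrm{Ran}[m_N]$. Then \[ w_1(\mu_{\mathrm{MC}}^{m;N},\mu_{\mathrm{MC}}^{m';N};N)=|m'-m|. \]
   Context: $\Lambda$ is a finite lattice with $N=|\Lambda|$ sites (identified with $[N]$), $\mathcal{S}=\{-1,1\}^\Lambda\subset\mathbb{R}^N$, $M[\phi]=\sum_{x}\phi(x)$, $m_N=M/N$, $\mathrm{Ran}[m_N]$ its range. For $m\in\mathrm{Ran}[m_N]$, $\mu_{\mathrm{MC}}^{m;N}$ is the uniform probability measure on $\mathcal{S}_m=\{\phi\in\mathcal{S}:m_N[\phi]=m\}$. The specific $1$-norm fluctuation distance is $w_1(\mu_1,\mu_2;N)=\inf_\gamma\int\gamma(d\phi,d\phi')\frac1N\sum_{x}|\phi(x)-\phi'(x)|$, the infimum over all couplings of $\mu_1,\mu_2$. *)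

From HB Require Import structures.
From mathcomp Require Import all_boot all_order all_algebra.
From mathcomp Require Import classical_sets reals.
Set Implicit Arguments. Unset Strict Implicit. Unset Printing Implicit Defensive.
Import Order.TTheory GRing.Theory Num.Theory.
Local Open Scope ring_scope.
Local Open Scope classical_set_scope.

(* Lattice Lambda identified with 'I_N.  A spin configuration phi : Lambda -> {-1,1}
   is encoded as a finite function into bool; [spin b] is its value in R. *)
Definition config (N : nat) := {ffun 'I_N -> bool}.

Definition spin {R : realType} (b : bool) : R := if b then 1 else -1.

Definition magn {R : realType} {N : nat} (phi : config N) : R :=
  \sum_(x : 'I_N) spin (phi x).

Definition mN {R : realType} {N : nat} (phi : config N) : R := magn phi / N%:R.

Definition Ran_mN {R : realType} (N : nat) : set R :=
  [set m | exists phi : config N, mN phi = m].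

Definition muMC {R : realType} (N : nat) (m : R) (phi : config N) : R :=
  if mN phi == m then (#|[set psi : config N | mN psi == m]|%:R)^-1 else 0.

Definition is_coupling {R : realType} {N : nat}
    (mu1 mu2 : config N -> R) (gamma : config N -> config N -> R) : Prop :=
  (forall phi phi', 0 <= gamma phi phi') /\
  (forall phi, \sum_(phi' : config N) gamma phi phi' = mu1 phi) /\
  (forall phi', \sum_(phi : config N) gamma phi phi' = mu2 phi').

Definition dist1 {R : realType} {N : nat} (phi phi' : config N) : R :=
  N%:R^-1 * \sum_(x : 'I_N) `|spin (phi x) - spin (phi' x)|.

Definition coupling_cost {R : realType} {N : nat}
    (gamma : config N -> config N -> R) : R :=
  \sum_(phi : config N) \sum_(phi' : config N) gamma phi phi' * dist1 phi phi'.

Definition w1 {R : realType} {N : nat} (mu1 mu2 : config N -> R) : R :=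
  inf [set c : R | exists gamma, is_coupling mu1 mu2 gamma /\ c = coupling_cost gamma].

From mathcomp Require Import all_boot all_order all_algebra.
From mathcomp Require Import boolp classical_sets reals.
From mathcomp Require Import zify ring lra.
Import Order.TTheory GRing.Theory Num.Theory.
Local Open Scope ring_scope.

Set Implicit Arguments. Unset Strict Implicit. Unset Printing Implicit Defensive.

(* Any coupling of the two microcanonical measures lives on S_m x S_m', where the
   specific distance is at least |m_N phi' - m_N phi| = |m' - m|; so w_1 >= |m' - m|.
   Conversely, for k <= k' up spins, choose the up-set A of phi uniformly among k-sets
   and then the up-set of phi' uniformly among the k'-supersets of A.  The identity
   C(N,k) C(N-k,k'-k) = C(N,k') C(k',k) shows that phi' is then uniform on its level,
   and since every pair in the support is ordered, phi <= phi' pointwise, the distance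
   is exactly m' - m.  The case k > k' follows by transposing the coupling. *)

Lemma mul_bin_subset (n k l : nat) : (k <= l <= n)%N ->
  ('C(n, k) * 'C(n - k, l - k) = 'C(n, l) * 'C(l, k))%N.
Proof.
move=> /andP[le_kl le_ln]; have le_kn := leq_trans le_kl le_ln.
have fact_gt0 : (0 < k`! * (l - k)`! * (n - l)`!)%N by rewrite !muln_gt0 !fact_gt0.
apply/eqP; rewrite -(eqn_pmul2r fact_gt0); apply/eqP.
have e : (n - k - (l - k) = n - l)%N by lia.
transitivity ('C(n, k) * (k`! * ('C(n - k, l - k) * ((l - k)`! * (n - l)`!))))%N.
  by ring.
rewrite -e bin_fact; last by lia.
rewrite bin_fact // -(bin_fact le_ln) -(bin_fact le_kl) e; ring.
Qed.

Lemma inf_attained (R : realType) (E : set R) (x : R) :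
  E x -> lbound E x -> inf E = x.
Proof.
move=> Ex lbx; apply: le_anti; rewrite lb_le_inf ?andbT //; last by exists x.
by apply: ge_inf => //; exists x.
Qed.

Lemma card_supsets_draws (T : finType) (A : {set T}) (k : nat) :
  (#|A| <= k <= #|T|)%N ->
  #|[set B : {set T} | (A \subset B) && (#|B| == k)]| = 'C(#|T| - #|A|, k - #|A|).
Proof.
move=> /andP[le_Ak le_kT].
have cardAC : #|~: A| = (#|T| - #|A|)%N by have := cardsC A; lia.
rewrite -bin_sub; last by lia.
have -> : (#|T| - #|A| - (k - #|A|) = #|T| - k)%N by lia.
rewrite -cardAC -cards_draws -(card_preimset _ (@finset.setC_inj _)).
apply: eq_card => B; rewrite !inE finset.subsetC; congr (_ && _).
by have hB := cardsC B; apply/eqP/eqP; lia.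
Qed.

Section Configurations.

Variable N : nat.
Implicit Types (phi psi : config N) (k : nat).

Definition spins_up phi : {set 'I_N} := [set x | phi x].

Definition nup phi : nat := #|spins_up phi|.

Lemma spins_up_bij : bijective spins_up.
Proof.
exists (fun A : {set 'I_N} => [ffun x => x \in A]).
  by move=> phi; apply/ffunP=> x; rewrite ffunE inE.
by move=> A; apply/setP=> x; rewrite inE ffunE.
Qed.

Lemma card_configs_up (P : pred {set 'I_N}) :
  #|[set psi | P (spins_up psi)]| = #|[set A | P A]|.
Proof.
rewrite -(on_card_preimset (f := spins_up)); last exact: onW_bij spins_up_bij.
by apply: eq_card => psi; rewrite !inE.
Qed.

Lemma nup_le phi : (nup phi <= N)%N.
Proof. by rewrite -[X in (_ <= X)%N]card_ord max_card. Qed.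

Lemma card_nup k : #|[set psi | nup psi == k]| = 'C(N, k).
Proof. by rewrite (card_configs_up (fun A => #|A| == k)) card_draws card_ord. Qed.

Lemma card_nup_below phi k :
  #|[set psi | (spins_up psi \subset spins_up phi) && (nup psi == k)]| = 'C(nup phi, k).
Proof.
by rewrite (card_configs_up (fun A => (A \subset spins_up phi) && (#|A| == k))) cards_draws.
Qed.

Lemma card_nup_above phi k : (nup phi <= k <= N)%N ->
  #|[set psi | (spins_up phi \subset spins_up psi) && (nup psi == k)]|
    = 'C(N - nup phi, k - nup phi).
Proof.
move=> hk; rewrite (card_configs_up (fun A => (spins_up phi \subset A) && (#|A| == k))).
by rewrite card_supsets_draws card_ord.
Qed.

End Configurations.

Section Couplings.

Variables (R : realType) (N : nat).
Implicit Types (phi psi : config N) (k : nat).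

Definition unif_level k phi : R := if nup phi == k then ('C(N, k)%:R)^-1 else 0.

Lemma magn_nup phi : magn phi = 2 * (nup phi)%:R - N%:R :> R.
Proof.
rewrite /magn (eq_bigr (fun x => 2 * (if x \in spins_up phi then 1 else 0) - 1)); last first.
  by move=> x _; rewrite inE /spin; case: (phi x) => /=; lra.
by rewrite sumrB -mulr_sumr -big_mkcond /= !sumr_const card_ord.
Qed.

Lemma eq_mN phi psi : (mN phi == mN psi :> R) = (nup phi == nup psi).
Proof.
rewrite /mN !magn_nup; case: N phi psi => [|n] phi psi.
  (* x / 0 = 0, so all magnetizations vanish; but then every nup is 0 too. *)
  by have := nup_le phi; have := nup_le psi; rewrite !leqn0 => /eqP-> /eqP->; rewrite !eqxx.
have n_neq0 : (n.+1)%:R != 0 :> R by rewrite pnatr_eq0.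
have two_neq0 : 2 != 0 :> R by rewrite pnatr_eq0.
apply/eqP/eqP => [|-> //].
by move=> /(mulIf (invr_neq0 n_neq0))/addIr/(mulfI two_neq0)/eqP; rewrite eqr_nat => /eqP.
Qed.

(* [muMC] counts a classical set, whose membership is a [Prop]. *)
Lemma card_level_mN phi0 :
  #|[set psi : config N | mN psi == mN phi0 :> R]%classic| = 'C(N, nup phi0).
Proof.
rewrite -card_nup; apply: eq_card => psi; rewrite [RHS]inE -eq_mN.
by apply/idP/idP => [/set_mem|/mem_set].
Qed.

Lemma muMC_mN phi0 : muMC (mN phi0) = unif_level (nup phi0).
Proof. by apply/funext => phi; rewrite /muMC /unif_level eq_mN card_level_mN. Qed.

Lemma muMC_support (m : R) phi : muMC m phi != 0 -> mN phi = m.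
Proof. by rewrite /muMC; case: (mN phi =P m) => // _; rewrite eqxx. Qed.

Lemma sum_if_const (P : pred (config N)) (c : R) :
  \sum_phi (if P phi then c else 0) = #|[set phi | P phi]|%:R * c.
Proof. by rewrite -big_mkcond sumr_const cardsE mulr_natl. Qed.

Lemma sum_unif_level k : (k <= N)%N -> \sum_phi unif_level k phi = 1.
Proof.
by move=> le_kN; rewrite sum_if_const card_nup mulfV // pnatr_eq0 -lt0n bin_gt0.
Qed.

Lemma dist1C phi psi : dist1 phi psi = dist1 psi phi :> R.
Proof. by rewrite /dist1; congr (_ * _); apply: eq_bigr => x _; rewrite distrC. Qed.

Lemma dist1_ge phi psi : `|mN psi - mN phi| <= dist1 phi psi :> R.
Proof.
rewrite /dist1 /mN /magn -mulrBl normrM mulrC ger0_norm ?invr_ge0 ?ler0n //.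
rewrite ler_wpM2l ?invr_ge0 ?ler0n // -sumrB (le_trans (ler_norm_sum _ _ _)) //.
by apply: ler_sum => x _; rewrite distrC.
Qed.

Lemma dist1_subset phi psi : spins_up phi \subset spins_up psi ->
  dist1 phi psi = mN psi - mN phi :> R.
Proof.
move=> /fintype.subsetP sub; rewrite /dist1 /mN /magn -mulrBl mulrC -sumrB; congr (_ * _).
apply: eq_bigr => x _; have /implyP := sub x; rewrite !inE /spin.
by case: (phi x); case: (psi x) => //= _; rewrite ?subrr ?normr0 // ler0_norm; lra.
Qed.

Section Coupling.

Variables (mu1 mu2 : config N -> R) (gamma : config N -> config N -> R).
Hypothesis gamma_coupling : is_coupling mu1 mu2 gamma.

Lemma coupling_support phi phi' :
  gamma phi phi' != 0 -> (mu1 phi != 0) && (mu2 phi' != 0).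
Proof.
case: gamma_coupling => ge0 [sum_row sum_col] neq0.
apply/andP; split; apply: contra neq0.
  by rewrite -sum_row => /eqP/psumr_eq0P ->.
by rewrite -sum_col => /eqP/psumr_eq0P ->.
Qed.

Lemma coupling_transpose : is_coupling mu2 mu1 (fun phi phi' => gamma phi' phi).
Proof. by case: gamma_coupling => ge0 [sum_row sum_col]. Qed.

Lemma coupling_cost_transpose :
  coupling_cost (fun phi phi' => gamma phi' phi) = coupling_cost gamma.
Proof.
rewrite /coupling_cost exchange_big; apply: eq_bigr => phi _.
by apply: eq_bigr => phi' _; rewrite dist1C.
Qed.

Hypothesis mu1_sum1 : \sum_phi mu1 phi = 1.

Lemma coupling_mean_const (c : R) : \sum_phi \sum_phi' gamma phi phi' * c = c.
Proof.
case: gamma_coupling => _ [sum_row _]; rewrite -[RHS]mul1r -mu1_sum1 mulr_suml.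
by apply: eq_bigr => phi _; rewrite -sum_row mulr_suml.
Qed.

Lemma coupling_cost_ge (c : R) :
  (forall phi phi', gamma phi phi' != 0 -> c <= dist1 phi phi') ->
  c <= coupling_cost gamma.
Proof.
move=> c_le; rewrite -[c in c <= _]coupling_mean_const.
apply: ler_sum => phi _; apply: ler_sum => phi' _.
have [->|neq0] := eqVneq (gamma phi phi') 0; first by rewrite !mul0r.
by rewrite ler_wpM2l ?c_le //; case: gamma_coupling.
Qed.

Lemma coupling_cost_le (c : R) :
  (forall phi phi', gamma phi phi' != 0 -> dist1 phi phi' <= c) ->
  coupling_cost gamma <= c.
Proof.
move=> le_c; rewrite -[c in _ <= c]coupling_mean_const.
apply: ler_sum => phi _; apply: ler_sum => phi' _.
have [->|neq0] := eqVneq (gamma phi phi') 0; first by rewrite !mul0r.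
by rewrite ler_wpM2l ?le_c //; case: gamma_coupling.
Qed.

End Coupling.

Definition monotone_coupling k k' phi phi' : R :=
  if [&& spins_up phi \subset spins_up phi', nup phi == k & nup phi' == k']
  then ('C(N, k) * 'C(N - k, k' - k))%:R^-1 else 0.

Lemma monotone_coupling_is_coupling k k' : (k <= k' <= N)%N ->
  is_coupling (unif_level k) (unif_level k') (monotone_coupling k k').
Proof.
move=> /andP[le_kk' le_k'N].
have binC_neq0 n l : (l <= n)%N -> 'C(n, l)%:R != 0 :> R.
  by move=> le_ln; rewrite pnatr_eq0 -lt0n bin_gt0.
split; first by move=> phi phi'; rewrite /monotone_coupling; case: ifP; rewrite ?invr_ge0.
split=> [phi | phi']; rewrite /unif_level /monotone_coupling.
- have [ek|neq] := eqVneq (nup phi) k; last by rewrite big1 // => phi' _; rewrite /= andbF.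
  have le_up : (nup phi <= k' <= N)%N by rewrite ek le_kk'.
  rewrite sum_if_const card_nup_above // ek natrM invfM mulrCA mulfV ?mulr1 //.
  by rewrite binC_neq0 //; lia.
- have [ek'|neq] := eqVneq (nup phi') k'; last by rewrite big1 // => phi _; rewrite !andbF.
  under eq_bigr do rewrite andbT.
  rewrite sum_if_const card_nup_below ek' mul_bin_subset ?le_kk' //.
  by rewrite natrM invfM mulrCA mulfV ?mulr1 // binC_neq0.
Qed.

Lemma monotone_coupling_dist1 phi0 phi1 phi phi' :
  monotone_coupling (nup phi0) (nup phi1) phi phi' != 0 ->
  dist1 phi phi' = mN phi1 - mN phi0 :> R.
Proof.
rewrite /monotone_coupling; case: and3P => [[sub e0 e1] _|]; last by rewrite eqxx.
have /eqP <- : mN phi == mN phi0 :> R by rewrite eq_mN.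
have /eqP <- : mN phi' == mN phi1 :> R by rewrite eq_mN.
exact: dist1_subset.
Qed.

Lemma exists_coupling_cost_le phi0 phi1 : exists2 gamma : config N -> config N -> R,
  is_coupling (muMC (mN phi0)) (muMC (mN phi1)) gamma &
  coupling_cost gamma <= `|mN phi1 - mN phi0|.
Proof.
wlog le01 : phi0 phi1 / (nup phi0 <= nup phi1)%N.
  move=> hwlog; have [/hwlog //|/ltnW/hwlog[gamma coupling cost_le]] := leqP (nup phi0) (nup phi1).
  exists (fun phi phi' => gamma phi' phi); first exact: coupling_transpose.
  by rewrite coupling_cost_transpose distrC.
have le_up : (nup phi0 <= nup phi1 <= N)%N by rewrite le01 nup_le.
have coupling := monotone_coupling_is_coupling le_up.
rewrite !muMC_mN; exists (monotone_coupling (nup phi0) (nup phi1)) => //.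
apply: (coupling_cost_le coupling (sum_unif_level (nup_le phi0))).
by move=> phi phi' /monotone_coupling_dist1 ->; apply: ler_norm.
Qed.

Lemma coupling_cost_muMC_ge phi0 (m' : R) (gamma : config N -> config N -> R) :
  is_coupling (muMC (mN phi0)) (muMC m') gamma ->
  `|m' - mN phi0| <= coupling_cost gamma.
Proof.
move=> coupling; have sum1 : \sum_(phi : config N) muMC (mN phi0) phi = 1 :> R.
  by rewrite muMC_mN; exact/sum_unif_level/nup_le.
apply: (coupling_cost_ge coupling sum1) => phi phi'.
by move=> /(coupling_support coupling)/andP[/muMC_support <- /muMC_support <-]; apply: dist1_ge.
Qed.

End Couplings.

Theorem theorem3p7 (R : realType) (N : nat) (m m' : R) :
  @Ran_mN R N m -> @Ran_mN R N m' ->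
  w1 (@muMC R N m) (@muMC R N m') = `|m' - m|.
Proof.
move=> [phi0 <-] [phi1 <-]; have [gamma coupling cost_le] := exists_coupling_cost_le R phi0 phi1.
apply: inf_attained => [|_ [gamma' [coupling' ->]]]; last exact: coupling_cost_muMC_ge.
exists gamma; split=> //; apply/le_anti.
by rewrite cost_le coupling_cost_muMC_ge.
Qed.
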